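(* Consider the generalized ScBM-VHAR model with fixed $1<b_M<b_L$, sample size $T$, $N=T-b_L$, satisfying (S1) $\det(I_q-\sum_{h=1}^{b_L}\Phi_hz^h)\ne0$ for $|z|\le1$ and (S2) $\|\Phi_h\|\le\phi_h$, $\phi_h\ge0$, $\sum_h\phi_h<1$. Let $\beta_V^*=\mathrm{vec}(B)\in\mathbb R^{3q^2}$ and $$\hat\beta_V=\arg\min_{\beta\in\mathbb R^{3q^2}}\Bigl\{\tfrac1N\|\mathrm{vec}(Z)-(I_q\otimes X_e)\beta\|_2^2+\lambda_{N,V}\|\beta\|_1\Bigr\}.$$ Assume: (i) $\beta_V^*$ is $\ell_V$-sparse; (ii) $\hat\Gamma_V:=N^{-1}(I_q\otimes(X_e'X_e))$ satisfies the restricted eigenvalue condition $\theta'\hat\Gamma_V\theta\ge\alpha_{R,V}\|\theta\|_2^2-\tau_{R,V}\|\theta\|_1^2$ for all $\theta$, with $\alpha_{R,V}>0$, $\tau_{R,V}\ge0$ and $\ell_V\le\alpha_{R,V}/(32\tau_{R,V})$; (iii) with $\hat\gamma_V:=N^{-1}(I_q\otimes X_e')\mathrm{vec}(Z)$, $\|\hat\gamma_V-\hat\Gamma_V\beta_V^*\|_\infty\le\lambda_{N,V}/4$ with probability tending to one, for $\lambda_{N,V}\asymp\sqrt{\log(sq)/N}$, $s=3$. Let $\hat\Phi^{\mathrm{lasso}}$ be the stacked horizon-specific coefficient matrix corresponding to $\hat\beta_V$. Then, with $s=3$, $$\|\hat\Phi^{\mathrm{lasso}}-\Phi\|=\mathcal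 O_{\mathbb P}(\sqrt{\ell_V}\lambda_{N,V})=\mathcal O_{\mathbb P}\Bigl(\sqrt{\ell_V\log(sq)/N}\Bigr).$$
   Context: Generalized ScBM-VHAR model: $Y_t=\Phi_{(S)}Y_{t-1}^{(S)}+\Phi_{(M)}Y_{t-1}^{(M)}+\Phi_{(L)}Y_{t-1}^{(L)}+\varepsilon_t$ with white noise, $Y_t^{(S)}=Y_t$, $Y_t^{(M)}=b_M^{-1}\sum_{h=0}^{b_M-1}Y_{t-h}$, $Y_t^{(L)}=b_L^{-1}\sum_{h=0}^{b_L-1}Y_{t-h}$, each $\Phi_{(h)}$ built from a weighted adjacency matrix of a random graph from a degree-corrected stochastic co-blockmodel. Implied VAR$(b_L)$ coefficients: $\Phi_1=\Phi_{(S)}+\Phi_{(M)}/b_M+\Phi_{(L)}/b_L$, $\Phi_2=\dots=\Phi_{b_M}=\Phi_{(M)}/b_M+\Phi_{(L)}/b_L$, $\Phi_{b_M+1}=\dots=\Phi_{b_L}=\Phi_{(L)}/b_L$. $Z=(Y_{b_L+1},\dots,Y_T)'\in\mathbb R^{N\times q}$; $X_e\in\mathbb R^{N\times3q}$ has rows $(Y_{t-1}^{(S)\prime},Y_{t-1}^{(M)\prime},Y_{t-1}^{(L)\prime})$; $B=[\Phi_{(S)}';\Phi_{(M)}';\Phi_{(L)}']\in\mathbb R^{3q\times q}$ so $Z=X_eB+E$. $\Phi$ denotes $B$ (the stacked horizon-specific matrix). $\|\cdot\|$ is the spectral norm. *)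

From HB Require Import structures.
From mathcomp Require Import all_boot all_order all_algebra.
From mathcomp Require Import all_classical all_reals all_analysis.
From mathcomp Require Import complex mxtens.

Set Implicit Arguments.
Unset Strict Implicit.
Unset Printing Implicit Defensive.

Import Order.TTheory GRing.Theory Num.Theory.
Local Open Scope classical_set_scope.
Local Open Scope ring_scope.

Section Defs.
Variable R : realType.

Definition norm2 {n} (v : 'cV[R]_n) : R := Num.sqrt (\sum_i v i 0 ^+ 2).
Definition norm1 {n} (v : 'cV[R]_n) : R := \sum_i `|v i 0|.
Definition norminf {n} (v : 'cV[R]_n) : R := \big[Num.max/0]_i `|v i 0|.

Definition spec_norm {m n} (A : 'M[R]_(m, n)) : R :=
  sup [set norm2 (A *m x) | x in [set x : 'cV[R]_n | norm2 x <= 1]].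

(* vec: column-major vectorisation (stack the columns); entry (i,j) of A
   sits at index j*m + i.  Kronecker product A (x) B is [tensmx A B]
   (entry (i*p+k, j*r+l) = A i j * B k l). *)
Definition vecm {m n} (A : 'M[R]_(m, n)) : 'cV[R]_(n * m) := (mxvec A^T)^T.

Definition har_avg {q} (b : nat) (Y : int -> 'cV[R]_q) (t : int) : 'cV[R]_q :=
  (b%:R)^-1 *: \sum_(h < b) Y (t - h%:Z).

Definition vhar_eq {q} (bM bL : nat) (PS PM PL : 'M[R]_q)
  (Y eps : int -> 'cV[R]_q) : Prop :=
  forall t : int, Y t = PS *m Y (t - 1) + PM *m har_avg bM Y (t - 1)
                       + PL *m har_avg bL Y (t - 1) + eps t.

(* implied VAR(b_L) coefficients Phi_h *)
Definition var_coef {q} (bM bL : nat) (PS PM PL : 'M[R]_q) (h : nat) : 'M[R]_q :=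
  if h == 1%N then PS + (bM%:R)^-1 *: PM + (bL%:R)^-1 *: PL
  else if (1 < h <= bM)%N then (bM%:R)^-1 *: PM + (bL%:R)^-1 *: PL
  else if (bM < h <= bL)%N then (bL%:R)^-1 *: PL
  else 0.

Definition cond_S1 {q} (bL : nat) (Phi : nat -> 'M[R]_q) : Prop :=
  forall z : R[i], `|z| <= 1 ->
    \det (1%:M - \sum_(1 <= h < bL.+1)
                   (z ^+ h) *: map_mx (fun x : R => (x%:C)%C) (Phi h)) != 0.

Definition cond_S2 {q} (bL : nat) (Phi : nat -> 'M[R]_q) : Prop :=
  exists phi : nat -> R,
    (forall h, 0 <= phi h) /\ \sum_(1 <= h < bL.+1) phi h < 1 /\
    (forall h, (1 <= h <= bL)%N -> spec_norm (Phi h) <= phi h).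

Definition white_noise d (Omega : measurableType d) (P : probability Omega R)
  {q} (eps : Omega -> int -> 'cV[R]_q) : Prop :=
  [/\ (forall t i, measurable_fun setT (fun w => eps w t i 0)),
      (forall t i, P.-integrable setT (fun w => ((eps w t i 0) ^+ 2)%:E)),
      (forall t i, (\int[P]_w (eps w t i 0)%:E = 0)%E),
      (forall t s i j, t != s ->
          (\int[P]_w (eps w t i 0 * eps w s j 0)%:E = 0)%E) &
      (forall t s i j, (\int[P]_w (eps w t i 0 * eps w t j 0)%:E
                      = \int[P]_w (eps w s i 0 * eps w s j 0)%:E)%E)].

Definition Zmat {q} (N bL : nat) (Y : int -> 'cV[R]_q) : 'M[R]_(N, q) :=
  \matrix_(i < N, j < q) Y (bL%:Z + 1 + i%:Z) j 0.

(* X_e : row i is (Y_{t-1}^{(S)'}, Y_{t-1}^{(M)'}, Y_{t-1}^{(L)'}) with t = b_L+1+i *)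
Definition Xe {q} (N bM bL : nat) (Y : int -> 'cV[R]_q) : 'M[R]_(N, q + q + q) :=
  row_mx (row_mx (\matrix_(i < N, j < q) Y (bL%:Z + i%:Z) j 0)
                 (\matrix_(i < N, j < q) har_avg bM Y (bL%:Z + i%:Z) j 0))
         (\matrix_(i < N, j < q) har_avg bL Y (bL%:Z + i%:Z) j 0).

Definition Bstack {q} (PS PM PL : 'M[R]_q) : 'M[R]_(q + q + q, q) :=
  col_mx (col_mx PS^T PM^T) PL^T.

Definition lasso_obj {q p} (N : nat) (Z : 'M[R]_(N, q)) (X : 'M[R]_(N, p))
  (lam : R) (beta : 'cV[R]_(q * p)) : R :=
  (N%:R)^-1 * norm2 (vecm Z - tensmx (1%:M : 'M[R]_q) X *m beta) ^+ 2
  + lam * norm1 beta.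

Definition is_lasso {q p} (N : nat) (Z : 'M[R]_(N, q)) (X : 'M[R]_(N, p))
  (lam : R) (beta : 'cV[R]_(q * p)) : Prop :=
  forall b : 'cV[R]_(q * p), lasso_obj Z X lam beta <= lasso_obj Z X lam b.

Definition Gamma_hat {q p} (N : nat) (X : 'M[R]_(N, p)) : 'M[R]_(q * p) :=
  (N%:R)^-1 *: tensmx (1%:M : 'M[R]_q) (X^T *m X).

Definition gamma_hat {q p} (N : nat) (Z : 'M[R]_(N, q)) (X : 'M[R]_(N, p))
  : 'cV[R]_(q * p) :=
  (N%:R)^-1 *: (tensmx (1%:M : 'M[R]_q) X^T *m vecm Z).

Definition nnz {n} (v : 'cV[R]_n) : nat := #|[set k : 'I_n | v k 0 != 0]|.

(* X_T = O_P(r_T): for every eps > 0 there are M > 0 and T0 such that for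
   T >= T0 the event {|X_T| <= M r_T} contains a measurable event of
   probability >= 1 - eps (inner-probability formulation). *)
Definition bigO_P d (Omega : measurableType d) (P : probability Omega R)
  (X : nat -> Omega -> R) (r : nat -> R) : Prop :=
  forall e : R, 0 < e -> exists M : R, 0 < M /\ exists T0 : nat,
    forall T, (T0 <= T)%N -> exists E : set Omega,
      [/\ measurable E, E `<=` [set w | `|X T w| <= M * r T] &
          ((1 - e)%:E <= P E)%E].

Definition wp_to_one d (Omega : measurableType d) (P : probability Omega R)
  (A : nat -> set Omega) : Prop :=
  forall e : R, 0 < e -> exists T0 : nat,
    forall T, (T0 <= T)%N -> exists E : set Omega,
      [/\ measurable E, E `<=` A T & ((1 - e)%:E <= P E)%E].

End Defs.

From HB Require Import structures.
From mathcomp Require Import all_boot all_order all_algebra.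
From mathcomp Require Import all_classical all_reals all_analysis.
From mathcomp Require Import complex mxtens.
From mathcomp Require Import ring lra.
Import Order.TTheory GRing.Theory Num.Theory.
Local Open Scope classical_set_scope.
Local Open Scope ring_scope.
Set Implicit Arguments.
Unset Strict Implicit.

(* The bound is deterministic on the event of assumption (iii).  Comparing the
   lasso objective at [beta_hat] and at [beta*] gives, for [v = beta_hat - beta*]
   with [A], [B] the l1 norms of [v] on and off the support [S] of [beta*],
   [2 v' Gamma v <= lam (3 A - B)].  Hence [v] lies in the cone [B <= 3 A], where
   [|v|_1 <= 4 A <= 4 sqrt(ell) |v|_2], so the restricted eigenvalue condition
   with [32 tau ell <= alpha] yields [v' Gamma v >= alpha/2 |v|_2^2], and
   therefore [alpha |v|_2^2 <= 3 lam A <= 3 lam sqrt(ell) |v|_2].  The spectral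
   norm of [Phi_hat - Phi] is at most its Frobenius norm [|v|_2]. *)

Lemma CauchySchwarz_sum (R : realFieldType) (I : finType) (P : pred I)
    (a b : I -> R) :
  (\sum_(i | P i) a i * b i) ^+ 2 <=
  (\sum_(i | P i) a i ^+ 2) * (\sum_(i | P i) b i ^+ 2).
Proof.
set A := \sum_(i | P i) a i ^+ 2; set B := \sum_(i | P i) b i ^+ 2.
set C := \sum_(i | P i) a i * b i.
have lagrange_ge0 :
    0 <= \sum_(i | P i) \sum_(j | P j) (a i * b j - a j * b i) ^+ 2.
  by do 2![apply: sumr_ge0 => ? _]; exact: sqr_ge0.
have inner i : \sum_(j | P j) (a i * b j - a j * b i) ^+ 2 =
    a i ^+ 2 * B + b i ^+ 2 * A - 2 * (a i * b i) * C.
  rewrite /A /B /C !mulr_sumr -!big_split /= -sumrB.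
  by apply: eq_bigr => j _; ring.
rewrite (eq_bigr _ (fun i _ => inner i)) sumrB big_split /= in lagrange_ge0.
rewrite -!mulr_suml -mulr_sumr -/A -/B -/C in lagrange_ge0.
nra.
Qed.

Section VectorNorms.
Variable R : realType.

Definition dot n (u w : 'cV[R]_n) : R := (u^T *m w) 0 0.

Lemma dotC n (u w : 'cV[R]_n) : dot u w = dot w u.
Proof.
rewrite /dot; transitivity ((u^T *m w)^T 0 0); first by rewrite [RHS]mxE.
by rewrite trmx_mul trmxK.
Qed.

Lemma dotDr n (u w1 w2 : 'cV[R]_n) : dot u (w1 + w2) = dot u w1 + dot u w2.
Proof. by rewrite /dot mulmxDr mxE. Qed.

Lemma dotNr n (u w : 'cV[R]_n) : dot u (- w) = - dot u w.
Proof. by rewrite /dot mulmxN mxE. Qed.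

Lemma dotZr n (u w : 'cV[R]_n) c : dot u (c *: w) = c * dot u w.
Proof. by rewrite /dot -scalemxAr mxE. Qed.

Lemma dotDl n (u1 u2 w : 'cV[R]_n) : dot (u1 + u2) w = dot u1 w + dot u2 w.
Proof. by rewrite dotC dotDr !(dotC w). Qed.

Lemma dotNl n (u w : 'cV[R]_n) : dot (- u) w = - dot u w.
Proof. by rewrite dotC dotNr dotC. Qed.

Lemma dot_mulmxl m n (A : 'M[R]_(m, n)) u w : dot (A *m u) w = dot u (A^T *m w).
Proof. by rewrite /dot trmx_mul mulmxA. Qed.

Lemma dotE n (u w : 'cV[R]_n) : dot u w = \sum_i u i 0 * w i 0.
Proof. by rewrite /dot mxE; apply: eq_bigr => i _; rewrite mxE. Qed.

Lemma norm2_sqr n (u : 'cV[R]_n) : norm2 u ^+ 2 = dot u u.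
Proof.
rewrite /norm2 sqr_sqrtr ?dotE; last by apply: sumr_ge0 => i _; exact: sqr_ge0.
by apply: eq_bigr => i _; rewrite expr2.
Qed.

Lemma norm2_ge0 n (u : 'cV[R]_n) : 0 <= norm2 u.
Proof. exact: sqrtr_ge0. Qed.

Lemma norm2_dim0 n (u : 'cV[R]_n) : n = 0%N -> norm2 u = 0.
Proof.
move=> n0; rewrite /norm2 big1 ?sqrtr0 // => i.
by have := ltn_ord i; rewrite {2}n0.
Qed.

Lemma norminf_ge0 n (g : 'cV[R]_n) : 0 <= norminf g.
Proof. exact: bigmax_ge_id. Qed.

Lemma dot_le_norm1_norminf n (u g : 'cV[R]_n) : dot u g <= norm1 u * norminf g.
Proof.
rewrite dotE /norm1 mulr_suml; apply: ler_sum => i _.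
rewrite (le_trans (ler_norm _)) // normrM ler_wpM2l //.
exact: (le_bigmax 0 (fun i => `|g i 0|) i).
Qed.

End VectorNorms.

Section Support.
Variables (R : realType) (n : nat) (b v : 'cV[R]_n).

Let S := [set i | b i 0 != 0].

Lemma norm1_on_support_le :
  \sum_(i in S) `|v i 0| <= Num.sqrt (nnz b)%:R * norm2 v.
Proof.
rewrite /norm2 -sqrtrM ?ler0n // -(@ler_sqr R) ?nnegrE ?sqrtr_ge0 ?sumr_ge0 //.
rewrite sqr_sqrtr; last by rewrite mulr_ge0 ?sumr_ge0 // => i _; exact: sqr_ge0.
have := CauchySchwarz_sum (fun i => i \in S) (fun i => `|v i 0|) (fun=> 1).
under eq_bigr do rewrite mulr1.
rewrite sumr_const expr1n mulrC => /le_trans; apply.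
rewrite ler_wpM2l // (eq_bigr _ (fun i _ => real_normK (num_real (v i 0)))).
rewrite [leRHS](bigID (fun i => i \in S)) /= lerDl.
by apply: sumr_ge0 => i _; exact: sqr_ge0.
Qed.

Lemma norm1_addr_ge :
  \sum_(i | i \notin S) `|v i 0| - \sum_(i in S) `|v i 0| <= norm1 (b + v) - norm1 b.
Proof.
rewrite /norm1 -sumrB [leRHS](bigID (fun i => i \in S)) /= addrC -sumrN.
apply: lerD; apply: ler_sum => i.
  move=> /negP; rewrite in_setE /= => /negP; rewrite negbK => /eqP b0.
  by rewrite mxE b0 add0r normr0 subr0.
move=> _; rewrite mxE.
have := ler_normD (b i 0 + v i 0) (- v i 0); rewrite normrN addrK; lra.
Qed.

End Support.

Section LassoErrorBound.
Variables (R : realType) (n : nat) (G : 'M[R]_n) (bs v g : 'cV[R]_n).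
Variables (lam alpha tau k : R).

Let Q := dot v (G *m v).
Let S := [set i | bs i 0 != 0].
Let A := \sum_(i in S) `|v i 0|.
Let B := \sum_(i | i \notin S) `|v i 0|.

Hypothesis lam_gt0 : 0 < lam.
Hypothesis Q_ge0 : 0 <= Q.
Hypothesis basic_ineq : Q - 2 * dot v g + lam * (norm1 (bs + v) - norm1 bs) <= 0.
Hypothesis noise_le : norminf g <= lam / 4.

Lemma norm1_split : norm1 v = A + B.
Proof. by rewrite /norm1 (bigID (fun i => i \in S)). Qed.

Lemma quad_le_cone : 2 * Q <= lam * (3 * A - B).
Proof.
have noise : dot v g <= (A + B) * (lam / 4).
  by rewrite -norm1_split (le_trans (dot_le_norm1_norminf _ _)) ?ler_wpM2l ?sumr_ge0.
have := ler_wpM2l (ltW lam_gt0) (norm1_addr_ge bs v); rewrite -/S -/A -/B.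
move: noise basic_ineq; rewrite mulrDl !mulrBr; lra.
Qed.

Lemma cone_condition : B <= 3 * A.
Proof.
have : 0 <= lam * (3 * A - B) by rewrite (le_trans _ quad_le_cone) ?mulr_ge0.
by rewrite pmulr_rge0 // subr_ge0.
Qed.

Hypothesis alpha_gt0 : 0 < alpha.
Hypothesis tau_ge0 : 0 <= tau.
Hypothesis tau_k_le : 32 * tau * k <= alpha.
Hypothesis nnz_le : (nnz bs)%:R <= k.
Hypothesis restricted_eigenvalue : alpha * norm2 v ^+ 2 - tau * norm1 v ^+ 2 <= Q.

Lemma support_norm1_le : A <= Num.sqrt k * norm2 v.
Proof.
apply: le_trans (norm1_on_support_le bs v) _.
by rewrite ler_wpM2r ?norm2_ge0 ?ler_sqrt // (le_trans _ nnz_le).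
Qed.

Lemma restricted_eigenvalue_on_cone : alpha / 2 * norm2 v ^+ 2 <= Q.
Proof.
have k_ge0 : 0 <= k by apply: le_trans nnz_le.
have norm1_le : norm1 v <= 4 * (Num.sqrt k * norm2 v).
  by rewrite norm1_split; have := cone_condition; have := support_norm1_le; lra.
have norm1_sqr_le : norm1 v ^+ 2 <= 16 * k * norm2 v ^+ 2.
  have : norm1 v ^+ 2 <= (4 * (Num.sqrt k * norm2 v)) ^+ 2.
    by rewrite ler_sqr ?nnegrE ?sumr_ge0 ?mulr_ge0 ?sqrtr_ge0 ?norm2_ge0.
  by rewrite !exprMn sqr_sqrtr // -mulrA; lra.
have := ler_wpM2l tau_ge0 norm1_sqr_le.
have := ler_wpM2r (sqr_ge0 (norm2 v)) tau_k_le.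
move: restricted_eigenvalue; lra.
Qed.

Lemma lasso_error_bound : norm2 v <= 3 / alpha * Num.sqrt k * lam.
Proof.
have B_ge0 : 0 <= B by apply: sumr_ge0.
have quad_le : alpha * norm2 v ^+ 2 <= 3 * lam * (Num.sqrt k * norm2 v).
  have lamB_ge0 : 0 <= lam * B by rewrite mulr_ge0 // ltW.
  move: restricted_eigenvalue_on_cone quad_le_cone lamB_ge0.
  move: (ler_wpM2l (ltW lam_gt0) support_norm1_le); rewrite mulrBr; lra.
have [->|v_gt0] := eqVneq (norm2 v) 0.
  by rewrite !mulr_ge0 ?sqrtr_ge0 ?invr_ge0 // ltW.
have {}v_gt0 : 0 < norm2 v by rewrite lt_def v_gt0 norm2_ge0.
rewrite -(ler_pM2l alpha_gt0) -(ler_pM2r v_gt0) -mulrA -expr2.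
have -> : alpha * (3 / alpha * Num.sqrt k * lam) * norm2 v =
          3 * lam * (Num.sqrt k * norm2 v) by field; rewrite gt_eqF.
exact: quad_le.
Qed.

End LassoErrorBound.

Section LassoObjective.
Variables (R : realType) (a b N : nat) (Z : 'M[R]_(N, a)) (X : 'M[R]_(N, b)).

Let Xt := tensmx (1%:M : 'M[R]_a) X.

Lemma Gamma_hatE : Gamma_hat (q := a) X = (N%:R)^-1 *: (Xt^T *m Xt).
Proof. by rewrite /Gamma_hat /Xt trmx_tens trmx1 tensmx_mul mul1mx. Qed.

Lemma gamma_hatE : gamma_hat Z X = (N%:R)^-1 *: (Xt^T *m vecm Z).
Proof. by rewrite /gamma_hat /Xt trmx_tens trmx1. Qed.

Lemma Gamma_hat_psd v : 0 <= dot v (Gamma_hat (q := a) X *m v).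
Proof.
by rewrite Gamma_hatE -scalemxAl dotZr -mulmxA -dot_mulmxl mulr_ge0 ?invr_ge0
  // -norm2_sqr sqr_ge0.
Qed.

Lemma lasso_objD lam (bs v : 'cV[R]_(a * b)) :
  lasso_obj Z X lam (bs + v) - lasso_obj Z X lam bs =
  dot v (Gamma_hat (q := a) X *m v)
  - 2 * dot v (gamma_hat Z X - Gamma_hat (q := a) X *m bs)
  + lam * (norm1 (bs + v) - norm1 bs).
Proof.
rewrite /lasso_obj !norm2_sqr Gamma_hatE gamma_hatE -!scalemxAl -scalerBr !dotZr.
rewrite -!mulmxA -!dot_mulmxl -/Xt mulmxDr.
set z := vecm Z; set p := Xt *m v; set s := Xt *m bs.
rewrite !(dotDl, dotDr, dotNl, dotNr) -!dot_mulmxl -/p -/s.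
rewrite (dotC z p) (dotC z s) (dotC s p); ring.
Qed.

End LassoObjective.

Section SpectralNorm.
Variable R : realType.

Lemma sum_mxvec m n (A : 'M[R]_(m, n)) (f : R -> R) :
  \sum_k f (mxvec A 0 k) = \sum_i \sum_j f (A i j).
Proof.
rewrite pair_big /= (reindex (uncurry (@mxvec_index m n))) /=.
  by apply: eq_bigr => -[i j] _; rewrite mxvecE.
exact: curry_mxvec_bij.
Qed.

Lemma norm2_vecm m n (D : 'M[R]_(m, n)) :
  norm2 (vecm D) = Num.sqrt (\sum_i \sum_j D i j ^+ 2).
Proof.
rewrite /norm2 /vecm; congr Num.sqrt.
under eq_bigr do rewrite mxE.
rewrite (sum_mxvec D^T (fun x => x ^+ 2)) exchange_big /=.
by apply: eq_bigr => i _; apply: eq_bigr => j _; rewrite mxE.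
Qed.

Lemma vecmB m n (A B : 'M[R]_(m, n)) : vecm (A - B) = vecm A - vecm B.
Proof. by rewrite /vecm !linearB. Qed.

Lemma norm2_0 n : norm2 (0 : 'cV[R]_n) = 0.
Proof. by rewrite /norm2 big1 ?sqrtr0 // => i _; rewrite mxE expr0n. Qed.

Lemma norm2_mulmx_le m n (D : 'M[R]_(m, n)) x :
  norm2 (D *m x) <= norm2 (vecm D) * norm2 x.
Proof.
rewrite norm2_vecm /norm2 -sqrtrM; last by do 2![apply: sumr_ge0 => ? _]; exact: sqr_ge0.
rewrite ler_wsqrtr // mulr_suml; apply: ler_sum => i _; rewrite mxE.
exact: CauchySchwarz_sum.
Qed.

Lemma spec_norm_ubound m n (D : 'M[R]_(m, n)) :
  ubound [set norm2 (D *m x) | x in [set x : 'cV[R]_n | norm2 x <= 1]]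
         (norm2 (vecm D)).
Proof.
move=> _ [x x_le1 <-]; apply: le_trans (norm2_mulmx_le D x) _.
by rewrite ler_piMr ?norm2_ge0.
Qed.

Lemma spec_norm_le_norm2_vecm m n (D : 'M[R]_(m, n)) :
  spec_norm D <= norm2 (vecm D).
Proof.
apply: ge_sup; last exact: spec_norm_ubound.
by exists (norm2 (D *m 0)), 0 => //=; rewrite norm2_0 ler01.
Qed.

Lemma spec_norm_ge0 m n (D : 'M[R]_(m, n)) : 0 <= spec_norm D.
Proof.
apply: le_trans (norm2_ge0 (D *m 0)) _.
apply: ub_le_sup; first by exists (norm2 (vecm D)); exact: spec_norm_ubound.
by exists 0 => //=; rewrite norm2_0 ler01.
Qed.

End SpectralNorm.

(* Positivity of [lam] is only needed in positive dimension: the rate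
   [sqrt (ln (3 q) / N)] vanishes when [q = 0]. *)
Lemma lasso_spec_norm_error (R : realType) a b N (Z : 'M[R]_(N, a))
    (X : 'M[R]_(N, b)) (Bs Bh : 'M[R]_(b, a)) (lam alpha tau k : R) :
  0 < alpha -> 0 <= tau -> 32 * tau * k <= alpha -> ((0 < a)%N -> 0 < lam) ->
  (nnz (vecm Bs))%:R <= k -> is_lasso Z X lam (vecm Bh) ->
  (forall theta, alpha * norm2 theta ^+ 2 - tau * norm1 theta ^+ 2
                   <= (theta^T *m Gamma_hat (q := a) X *m theta) 0 0) ->
  norminf (gamma_hat Z X - Gamma_hat (q := a) X *m vecm Bs) <= lam / 4 ->
  spec_norm (Bh - Bs) <= 3 / alpha * Num.sqrt k * lam.
Proof.
move=> alpha_gt0 tau_ge0 tau_k_le lam_gt0 nnz_le lasso RE noise.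
apply: le_trans (spec_norm_le_norm2_vecm _) _; rewrite vecmB.
have [a0|a_gt0] := posnP a.
  have lam_ge0 : 0 <= lam by have := le_trans (norminf_ge0 _) noise; lra.
  by rewrite norm2_dim0 ?a0 // !mulr_ge0 ?sqrtr_ge0 ?invr_ge0 // ltW.
apply: (lasso_error_bound (G := Gamma_hat (q := a) X) (lam_gt0 a_gt0)
  (Gamma_hat_psd X _) _ noise alpha_gt0 tau_ge0 tau_k_le nnz_le).
- by rewrite -lasso_objD subrKC subr_le0 lasso.
- by rewrite /dot mulmxA; exact: RE.
Qed.

Section StochasticOrder.
Variables (R : realType) (d : measure_display) (Omega : measurableType d).
Variable P : probability Omega R.

Lemma bigO_P_wp_to_one (A : nat -> set Omega) (X : nat -> Omega -> R)
    (r : nat -> R) (M : R) (T0 : nat) :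
  0 < M -> wp_to_one P A ->
  (forall T w, (T0 <= T)%N -> A T w -> `|X T w| <= M * r T) -> bigO_P P X r.
Proof.
move=> M_gt0 wpA bound e e_gt0; exists M; split => //.
have [T1 hT1] := wpA e e_gt0; exists (maxn T0 T1) => T.
rewrite geq_max => /andP[T0T T1T]; have [E [mE EA PE]] := hT1 T T1T.
by exists E; split => // w /EA; exact: bound.
Qed.

Lemma bigO_P_le (X : nat -> Omega -> R) (r r' : nat -> R) (c : R) (T0 : nat) :
  0 < c -> (forall T, (T0 <= T)%N -> r T <= c * r' T) ->
  bigO_P P X r -> bigO_P P X r'.
Proof.
move=> c_gt0 r_le Xr e e_gt0; have [M [M_gt0 [T1 hT1]]] := Xr e e_gt0.
exists (M * c); split; first exact: mulr_gt0.
exists (maxn T0 T1) => T; rewrite geq_max => /andP[T0T T1T].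
have [E [mE EX PE]] := hT1 T T1T; exists E; split => // w /EX /le_trans; apply.
by rewrite -mulrA ler_wpM2l ?r_le // ltW.
Qed.

End StochasticOrder.

Theorem lemma4p6 (R : realType) (d : measure_display)
  (Omega : measurableType d) (P : probability Omega R)
  (bM bL : nat) (q : nat -> nat)
  (PhiS PhiM PhiL : forall T : nat, 'M[R]_(q T))
  (Y eps : forall T : nat, Omega -> int -> 'cV[R]_(q T))
  (Phihat : forall T : nat, Omega -> 'M[R]_(q T + q T + q T, q T))
  (lam : nat -> R) (ell : nat -> nat) (alpha : R) (tau : nat -> R) :
  (1 < bM)%N -> (bM < bL)%N ->
  (* the generalized ScBM-VHAR model with white noise *)
  (forall T, white_noise P (eps T)) ->
  (forall T t i, measurable_fun setT (fun w => Y T w t i 0)) ->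
  (forall T w, vhar_eq bM bL (PhiS T) (PhiM T) (PhiL T) (Y T w) (eps T w)) ->
  (* (S1), (S2) *)
  (forall T, cond_S1 bL (var_coef bM bL (PhiS T) (PhiM T) (PhiL T))) ->
  (forall T, cond_S2 bL (var_coef bM bL (PhiS T) (PhiM T) (PhiL T))) ->
  (* vec(Phihat) is the lasso estimator beta_hat_V *)
  (forall T w, (bL < T)%N ->
     is_lasso (Zmat (T - bL) bL (Y T w)) (Xe (T - bL) bM bL (Y T w))
              (lam T) (vecm (Phihat T w))) ->
  (* (i) beta*_V = vec(B) is ell_V-sparse *)
  (forall T, (bL < T)%N ->
     (nnz (vecm (Bstack (PhiS T) (PhiM T) (PhiL T))) <= ell T)%N) ->
  (* (ii) restricted eigenvalue condition *)
  0 < alpha -> (forall T, 0 <= tau T) ->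
  (forall T, (bL < T)%N -> 32 * tau T * (ell T)%:R <= alpha) ->
  (forall T w (theta : 'cV[R]_(q T * (q T + q T + q T))), (bL < T)%N ->
     alpha * norm2 theta ^+ 2 - tau T * norm1 theta ^+ 2
       <= (theta^T *m Gamma_hat (q := q T) (Xe (T - bL) bM bL (Y T w)) *m theta) 0 0) ->
  (* lambda_{N,V} asymp sqrt(log(s q)/N), s = 3 *)
  (exists c1 c2 : R, 0 < c1 /\ 0 < c2 /\ exists T0 : nat, forall T, (T0 <= T)%N ->
     c1 * Num.sqrt (ln (3 * q T)%:R / (T - bL)%:R) <= lam T /\
     lam T <= c2 * Num.sqrt (ln (3 * q T)%:R / (T - bL)%:R)) ->
  (* (iii) deviation bound with probability tending to one *)
  wp_to_one P (fun T => [set w |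
     norminf (gamma_hat (Zmat (T - bL) bL (Y T w)) (Xe (T - bL) bM bL (Y T w))
              - Gamma_hat (q := q T) (Xe (T - bL) bM bL (Y T w))
                  *m vecm (Bstack (PhiS T) (PhiM T) (PhiL T)))
       <= lam T / 4]) ->
  (* conclusion *)
  bigO_P P (fun T w => spec_norm (Phihat T w - Bstack (PhiS T) (PhiM T) (PhiL T)))
           (fun T => Num.sqrt (ell T)%:R * lam T) /\
  bigO_P P (fun T w => spec_norm (Phihat T w - Bstack (PhiS T) (PhiM T) (PhiL T)))
           (fun T => Num.sqrt ((ell T)%:R * ln (3 * q T)%:R / (T - bL)%:R)).
Proof.
move=> _ _ _ _ _ _ _ lasso sparse alpha_gt0 tau_ge0 tau_ell RE
  [c1 [c2 [c1_gt0 [c2_gt0 [T0 lam_rate]]]]] deviation.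
have lam_gt0 T : (T0 <= T)%N -> (bL < T)%N -> (0 < q T)%N -> 0 < lam T.
  move=> T0T bLT q_gt0; apply: lt_le_trans (proj1 (lam_rate T T0T)).
  rewrite mulr_gt0 // sqrtr_gt0 divr_gt0 ?ltr0n ?subn_gt0 // ln_gt0 // ltr1n.
  exact: leq_trans (leq_pmulr 3 q_gt0).
have rate : bigO_P P
    (fun T w => spec_norm (Phihat T w - Bstack (PhiS T) (PhiM T) (PhiL T)))
    (fun T => Num.sqrt (ell T)%:R * lam T).
  apply: (bigO_P_wp_to_one (M := 3 / alpha) (T0 := maxn T0 bL.+1) _ deviation).
    exact: divr_gt0.
  move=> T w; rewrite geq_max => /andP[T0T bLT] dev.
  rewrite ger0_norm ?spec_norm_ge0 // mulrA.
  apply: (lasso_spec_norm_error alpha_gt0 (tau_ge0 T) (tau_ell T bLT)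
    (lam_gt0 T T0T bLT) _ (lasso T w bLT) (fun theta => RE T w theta bLT) dev).
  by rewrite ler_nat sparse.
split=> //; apply: (bigO_P_le (T0 := T0) _ _ rate) => [|T T0T]; first exact: c2_gt0.
rewrite -mulrA sqrtrM ?ler0n // mulrCA ler_wpM2l ?sqrtr_ge0 //.
exact: (proj2 (lam_rate T T0T)).
Qed.
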